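(* If $G$ is a connected graph of order at least two and $t\ge 2$, then $O_{\rm SR}(G\diamond K_t)=\mathcal{B}$.
   Context: All graphs are finite, simple and undirected; $\overline{X}$ denotes the complement of $X$. The modular product $G\diamond H$ has vertex set $V(G)\times V(H)$, and $(g,h)$, $(g',h')$ are adjacent iff one of the following holds: ($g=g'$ and $hh'\in E(H)$), or ($h=h'$ and $gg'\in E(G)$), or ($gg'\in E(G)$ and $hh'\in E(H)$), or ($gg'\in E(\overline{G})$ and $hh'\in E(\overline{H})$). A set $S\subseteq V(X)$ is a strong resolving set of a connected graph $X$ if for all distinct $x,y\in V(X)$ there exists $z\in S$ such that $x$ lies on a $y$–$z$ geodesic or $y$ lies on an $x$–$z$ geodesic. The Maker–Breaker strong resolving game on $X$: Maker and Breaker alternately select a not-yet-chosen vertex of $X$; Maker wins if the vertices he selects contain a strong resolving set of $X$, Breaker wins otherwise. In the M-game Maker moves first, in the B-game Breaker moves first. $O_{\rm SR}(X)=\mathcal{M}$ if Maker has a winning strategy in both games, $\mathcal{B}$ if Breaker has a winning strategy in both, and $\mathcal{N}$ if the first player has a winning strategy in each. *)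

From mathcomp Require Import all_boot.
Set Implicit Arguments. Unset Strict Implicit. Unset Printing Implicit Defensive.

Definition simple_graph (T : finType) (e : rel T) : Prop :=
  symmetric e /\ irreflexive e.

Definition connected_graph (T : finType) (e : rel T) : Prop :=
  forall x y : T, connect e x y.

Definition Kt (t : nat) : rel 'I_t := fun i j => i != j.

Definition modprod (A B : finType) (eG : rel A) (eH : rel B) : rel (A * B) :=
  fun x y =>
    [|| (x.1 == y.1) && eH x.2 y.2,
        (x.2 == y.2) && eG x.1 y.1,
        eG x.1 y.1 && eH x.2 y.2
      | [&& x.1 != y.1, ~~ eG x.1 y.1, x.2 != y.2 & ~~ eH x.2 y.2]].

Definition on_geodesic (T : finType) (e : rel T) (y z x : T) : Prop :=
  exists p : seq T,
    [/\ path e y p, last y p = z,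
        (forall q : seq T, path e y q -> last y q = z -> size p <= size q)
      & x \in y :: p].

Definition strong_resolving (T : finType) (e : rel T) (S : {set T}) : Prop :=
  forall x y : T, x != y ->
    exists2 z, z \in S & (on_geodesic e y z x \/ on_geodesic e x z y).

Definition maker_goal (T : finType) (e : rel T) (M : {set T}) : Prop :=
  exists2 S : {set T}, S \subset M & strong_resolving e S.

(* Maker-Breaker game positions: M = Maker's vertices, B = Breaker's vertices,
   the bool is true iff it is Maker's turn.  The game ends when every vertex
   has been chosen. *)
Inductive MakerWins (T : finType) (e : rel T) : {set T} -> {set T} -> bool -> Prop :=
| MW_end M B b :
    (forall v, v \in M :|: B) -> maker_goal e M -> MakerWins e M B b
| MW_maker M B v :
    v \notin M :|: B -> MakerWins e (v |: M) B false -> MakerWins e M B true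
| MW_breaker M B :
    (exists v, v \notin M :|: B) ->
    (forall v, v \notin M :|: B -> MakerWins e M (v |: B) true) ->
    MakerWins e M B false.

Inductive BreakerWins (T : finType) (e : rel T) : {set T} -> {set T} -> bool -> Prop :=
| BW_end M B b :
    (forall v, v \in M :|: B) -> ~ maker_goal e M -> BreakerWins e M B b
| BW_maker M B :
    (exists v, v \notin M :|: B) ->
    (forall v, v \notin M :|: B -> BreakerWins e (v |: M) B false) ->
    BreakerWins e M B true
| BW_breaker M B v :
    v \notin M :|: B -> BreakerWins e M (v |: B) true -> BreakerWins e M B false.

(* Outcomes: M-game = Maker starts (true), B-game = Breaker starts (false). *)
Inductive outcome := OutM | OutB | OutN.

Definition outcome_is (T : finType) (e : rel T) (o : outcome) : Prop :=
  match o with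
  | OutM => MakerWins e set0 set0 true /\ MakerWins e set0 set0 false
  | OutB => BreakerWins e set0 set0 true /\ BreakerWins e set0 set0 false
  | OutN => MakerWins e set0 set0 true /\ BreakerWins e set0 set0 false
  end.

From mathcomp Require Import all_boot zify.
Set Implicit Arguments. Unset Strict Implicit. Unset Printing Implicit Defensive.

(* Pick a diametral pair a, b of G and two vertices i, j of K_t.  No two of
   the four vertices (a,i), (a,j), (b,i), (b,j) can be strongly resolved by a
   third vertex: two of them in the same G-fibre are true twins, and a vertex
   over a is farthest from every vertex over b (and vice versa), because walks
   of the product project onto walks of G that are no longer.  So Breaker wins
   as soon as he owns two of these four vertices, which he can always achieve,
   whoever starts. *)

Section Geodesics.
Variables (U : finType) (R : rel U).

Definition never_on_geodesic (y x : U) :=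
  forall z, z != x -> ~ on_geodesic R y z x.

Lemma on_geodesic_split y z x : x != y -> z != x -> on_geodesic R y z x ->
  exists (p1 : seq U) (h : U) (p2 : seq U),
    [/\ path R y (rcons p1 x), R x h, path R h p2, last h p2 = z &
    forall q, path R y q -> last y q = z -> size p1 + size p2 + 2 <= size q].
Proof.
move=> nxy nzx [p [yp pz pmin]]; rewrite in_cons (negbTE nxy) /= => xp.
case/splitPr: xp yp pz pmin => p1 [|h p2]; rewrite cat_path last_cat /=.
  by move=> _ xz; rewrite xz eqxx in nzx.
case/and3P=> yp1 Rp1x /andP[Rxh hp2] p2z pmin.
exists p1, h, p2; split=> // [|q yq qz]; first by rewrite rcons_path yp1.
by have := pmin q yq qz; rewrite size_cat /=; lia.
Qed.

Lemma twin_never_on_geodesic x y : x != y ->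
  (forall h, R x h -> h = y \/ R y h) -> never_on_geodesic y x.
Proof.
move=> nxy twin z nzx.
case/(on_geodesic_split nxy nzx) => p1 [h [p2 [_ Rxh hp2 p2z min]]].
case: (twin h Rxh) => [hy | Ryh].
  by have := min p2; rewrite -hy => /(_ hp2 p2z); lia.
by have := min (h :: p2); rewrite /= Ryh hp2 => /(_ isT p2z); lia.
Qed.

Lemma farthest_never_on_geodesic x y : x != y ->
  (forall z, exists2 q, path R y q /\ last y q = z &
     forall r, path R y r -> last y r = x -> size q <= size r) ->
  never_on_geodesic y x.
Proof.
move=> nxy far z nzx.
case/(on_geodesic_split nxy nzx) => p1 [h [p2 [yp1x _ _ p2z min]]].
have [q [yq qz] qmin] := far z.
have := qmin _ yp1x (last_rcons _ _ _); have := min q yq qz.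
by rewrite size_rcons; lia.
Qed.

Definition blocking (A : {set U}) :=
  forall M : {set U}, [disjoint A & M] -> ~ maker_goal R M.

Lemma never_on_geodesic_blocking x y : x != y ->
  never_on_geodesic y x -> never_on_geodesic x y -> blocking [set x; y].
Proof.
move=> nxy yx xy M AM [S SM Sres]; have [z zS zxy] := Sres x y nxy.
have /(disjointFl AM) : z \in M by apply: (subsetP SM).
rewrite !inE => /norP[nzx nzy].
by case: zxy; [apply: yx | apply: xy].
Qed.

End Geodesics.

Section Distance.
Variables (U : finType) (R : rel U).
Hypothesis R_conn : connected_graph R.

Definition has_walk_of_size (u v : U) (n : nat) :=
  [exists s : n.-tuple U, path R u s && (last u s == v)].

Lemma exists_walk_of_size u v : exists n, has_walk_of_size u v n.
Proof.
have /connectP [p up pv] := R_conn u v.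
by exists (size p); apply/existsP; exists (in_tuple p); rewrite /= up pv eqxx.
Qed.

Definition dist u v := ex_minn (exists_walk_of_size u v).

Lemma dist_walk u v :
  exists s, [/\ path R u s, last u s = v & size s = dist u v].
Proof.
rewrite /dist; case: ex_minnP => n /existsP [s /andP [us /eqP sv]] _.
by exists s; rewrite size_tuple.
Qed.

Lemma dist_min u v s : path R u s -> last u s = v -> dist u v <= size s.
Proof.
move=> us sv; rewrite /dist; case: ex_minnP => n _; apply.
by apply/existsP; exists (in_tuple s); rewrite /= us sv eqxx.
Qed.

Lemma dist_eq0 u v : (dist u v == 0) = (u == v).
Proof.
apply/idP/eqP => [/eqP d0 | <-]; last by rewrite -leqn0 (@dist_min u u [::]).
by have [[|? ?] [_ uv]] := dist_walk u v; rewrite d0.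
Qed.

Lemma dist_sym : symmetric R -> forall u v, dist u v = dist v u.
Proof.
suff le_dist : symmetric R -> forall u v, dist u v <= dist v u.
  by move=> Rsym u v; apply/eqP; rewrite eqn_leq !le_dist.
move=> Rsym u v; have [s [vs su <-]] := dist_walk v u.
rewrite -(size_belast v) -size_rev; apply: dist_min.
  by rewrite -{1}su rev_path; apply: sub_path vs => x y; rewrite Rsym.
by case: s {vs} su => [|w s] /= => [->|_]; rewrite ?rev_cons ?last_rcons.
Qed.

Lemma exists_diametral_pair : symmetric R -> 1 < #|U| ->
  exists a b, [/\ a != b, forall c, dist a c <= dist a b
                        & forall c, dist b c <= dist b a].
Proof.
move=> Rsym /card_gt1P [u [v [_ _ nuv]]].
have [[a b] _ abmax] := @arg_maxnP _ (u, u) xpredT (fun p => dist p.1 p.2) isT.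
have diam c d : dist c d <= dist a b by exact: (abmax (c, d)).
exists a, b; split=> [|c|c]; rewrite ?(dist_sym Rsym b a) ?diam //.
apply: contraNneq nuv => ab; rewrite -dist_eq0 -leqn0.
by rewrite (leq_trans (diam u v)) // ab leqn0 dist_eq0.
Qed.

End Distance.

Section ModularProductComplete.
Variables (T : finType) (e : rel T) (t : nat).
Hypothesis e_irr : irreflexive e.
Local Notation P := (modprod e (@Kt t)).

Lemma modprod_KtE a i c k : P (a, i) (c, k) = if a == c then i != k else e a c.
Proof.
rewrite /modprod /Kt /=.
have [<-|_] := eqVneq a c; first by rewrite e_irr !andbF !orbF.
by case: (e a c); case: (i == k).
Qed.

Lemma modprod_Kt_twins c k k' : k != k' -> never_on_geodesic P (c, k') (c, k).
Proof.
move=> nkk; apply: twin_never_on_geodesic; first by rewrite xpair_eqE eqxx.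
move=> [d l]; rewrite !modprod_KtE; case: eqP => [<- | _]; last by right.
by have [-> | nlk'] := eqVneq l k'; [left | right].
Qed.

Lemma modprod_Kt_lift_path s b j k :
  path e b s -> path P (b, j) [seq (v, k) | v <- s].
Proof.
elim: s b j => //= c s IHs b j /andP [ebc cs].
by rewrite modprod_KtE ebc IHs // andbT; case: eqP ebc => // <-; rewrite e_irr.
Qed.

Lemma modprod_Kt_proj_path r b j : path P (b, j) r ->
  exists s, [/\ path e b s, last b s = (last (b, j) r).1 & size s <= size r].
Proof.
elim: r b j => [|[c k] r IHr] b j /=; first by exists [::].
case/andP; rewrite modprod_KtE => bc /IHr [s [cs sr le_sr]].
have [-> | nbc] := eqVneq b c; first by exists s; rewrite cs sr leqW.
by rewrite (negbTE nbc) in bc; exists (c :: s); rewrite /= bc cs sr.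
Qed.

Hypothesis e_conn : connected_graph e.

Lemma modprod_Kt_farthest u w j i : u != w ->
  (forall c, dist e_conn u c <= dist e_conn u w) ->
  never_on_geodesic P (u, j) (w, i).
Proof.
move=> nuw ecc; apply: farthest_never_on_geodesic.
  by rewrite xpair_eqE negb_and eq_sym nuw.
have dist_uw_le r : path P (u, j) r -> last (u, j) r = (w, i) ->
    dist e_conn u w <= size r.
  move=> ur rw; have [s [us sw le_sr]] := modprod_Kt_proj_path ur.
  by rewrite (leq_trans _ le_sr) // (dist_min e_conn us) // sw rw.
move=> [c k]; have [<- | nuc] := eqVneq u c.
  have [<- | njk] := eqVneq j k; first by exists [::].
  exists [:: (u, k)]; first by rewrite /= modprod_KtE eqxx njk.
  move=> r /dist_uw_le le_r /le_r; apply: leq_trans.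
  by rewrite lt0n dist_eq0.
have [s [us sc s_dist]] := dist_walk e_conn u c.
exists [seq (v, k) | v <- s].
  split; first exact: modprod_Kt_lift_path.
  case: s {us s_dist} sc => [/eqP|v s]; first by rewrite (negbTE nuc).
  by rewrite /= (last_map (pair^~ k)) => ->.
move=> r /dist_uw_le le_r /le_r; apply: leq_trans.
by rewrite size_map s_dist.
Qed.

Lemma modprod_Kt_never_on_geodesic a b x y :
  a != b -> (forall c, dist e_conn a c <= dist e_conn a b) ->
  (forall c, dist e_conn b c <= dist e_conn b a) ->
  x.1 \in [set a; b] -> y.1 \in [set a; b] -> x != y ->
  never_on_geodesic P y x.
Proof.
case: x y => [c k] [c' k'] nab ecc_a ecc_b /= cab c'ab.
have [<- | ncc _] := eqVneq c c'.
  by rewrite xpair_eqE eqxx => /modprod_Kt_twins.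
move: cab c'ab ncc; rewrite !inE => /orP[]/eqP-> /orP[]/eqP->.
- by rewrite eqxx.
- by move=> _; apply: modprod_Kt_farthest; rewrite // eq_sym.
- by move=> _; apply: modprod_Kt_farthest.
- by rewrite eqxx.
Qed.

End ModularProductComplete.

Lemma cardsCU1 (U : finType) (X : {set U}) v :
  v \notin X -> #|~: X| = #|~: (v |: X)|.+1.
Proof.
move=> vX; have := cardsC X; have := cardsC (v |: X).
by rewrite cardsU1 vX; lia.
Qed.

Lemma cardsDU1 (U : finType) (V X : {set U}) v :
  #|V :\: X| <= #|V :\: (v |: X)|.+1.
Proof. by rewrite setUC -setDDl (cardsD1 v (V :\: X)); case: (_ \in _). Qed.

Lemma BreakerWins_blocked (U : finType) (R : rel U) (A M B : {set U}) b :
  blocking R A ->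
  A \subset B -> [disjoint A & M] -> BreakerWins R M B b.
Proof.
move=> blockA; move: {2}#|~: (M :|: B)| (leqnn #|~: (M :|: B)|) => n.
elim: n M B b => [|n IHn] M B b free_n AB AM;
  (case: (boolP [forall v, v \in M :|: B]) => [/forallP full | /forallPn [v vMB]];
   first by apply: BW_end => //; apply: blockA).
  move: free_n; rewrite leqn0 cards_eq0 => /eqP/setP/(_ v).
  by rewrite in_setC vMB inE.
case: b.
  apply: BW_maker => [|w wMB]; first by exists v.
  apply: IHn => //; first by rewrite -setUA -ltnS -cardsCU1.
  rewrite disjoints_subset; apply/subsetP => z zA.
  rewrite !inE negb_or (disjointFr AM zA) andbT.
  by apply: contraNneq wMB => <-; rewrite inE (subsetP AB z zA) orbT.
apply: (BW_breaker vMB); apply: IHn => //.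
- by rewrite setUCA -ltnS -cardsCU1.
- exact: subset_trans AB (subsetU1 _ _).
Qed.

Section BreakerStrategy.
Variables (U : finType) (R : rel U) (V : {set U}).
Hypothesis V_blocking :
  forall x y, x \in V -> y \in V -> x != y -> blocking R [set x; y].

Lemma BreakerWins_holding_one (M B : {set U}) x :
  x \in V -> x \in B -> x \notin M -> 1 < #|V :\: (M :|: B)| ->
  BreakerWins R M B true.
Proof.
move=> xV xB xM free_V; have /card_gt0P [v] := ltnW free_V.
rewrite inE => /andP[vMB _]; apply: BW_maker => [|m mMB]; first by exists v.
have /card_gt0P [w] : 0 < #|V :\: (m |: (M :|: B))|.
  by have := cardsDU1 V (M :|: B) m; lia.
rewrite in_setD in_setU1 negb_or => /andP[/andP[wm wMB] wV].
apply: (@BW_breaker _ _ _ _ w); first by rewrite -setUA in_setU1 negb_or wm.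
have nxw : x != w by apply: contraNneq wMB => <-; rewrite inE xB orbT.
apply: (BreakerWins_blocked _ (V_blocking xV wV nxw)).
  by apply/subsetP => z; rewrite !inE => /orP[] /eqP->; rewrite ?eqxx ?xB ?orbT.
rewrite disjoints_subset; apply/subsetP => z.
rewrite !inE negb_or => /orP[] /eqP->.
  by rewrite xM andbT; apply: contraNneq mMB => <-; rewrite inE xB orbT.
by rewrite wm; apply: contra wMB; rewrite inE => ->.
Qed.

Lemma BreakerWins_to_move (M B : {set U}) :
  2 < #|V :\: (M :|: B)| -> BreakerWins R M B false.
Proof.
move=> free_V; have /card_gt0P [x] := ltnW (ltnW free_V).
rewrite inE => /andP[xMB xV]; apply: (BW_breaker xMB).
apply: (BreakerWins_holding_one xV (setU11 x B)).
  by apply: contra xMB; rewrite inE => ->.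
by rewrite setUCA; have := cardsDU1 V (M :|: B) x; lia.
Qed.

Lemma BreakerWins_both_games : 3 < #|V| -> outcome_is R OutB.
Proof.
move=> V4; have /card_gt0P [v vV] : 0 < #|V| by lia.
split; last by apply: BreakerWins_to_move; rewrite setU0 setD0; lia.
apply: BW_maker => [|m _]; first by exists v; rewrite !inE.
apply: BreakerWins_to_move.
by have := cardsDU1 V set0 m; rewrite !setU0 setD0; lia.
Qed.

End BreakerStrategy.

Theorem mainTheorem16 (T : finType) (e : rel T) (t : nat) :
  simple_graph e -> connected_graph e -> 2 <= #|T| -> 2 <= t ->
  outcome_is (modprod e (@Kt t)) OutB.
Proof.
move=> [e_sym e_irr] e_conn card_T t_ge2.
have [a [b [nab ecc_a ecc_b]]] := exists_diametral_pair e_conn e_sym card_T.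
have /card_gt1P [i [j [_ _ nij]]] : 1 < #|'I_t| by rewrite card_ord.
apply: (@BreakerWins_both_games _ _ (setX [set a; b] [set i; j])).
  move=> [c k] [c' k'] /setXP [cab _] /setXP [c'ab _] nxy.
  have ab_never := modprod_Kt_never_on_geodesic e_irr nab ecc_a ecc_b.
  by apply: never_on_geodesic_blocking => //; apply: ab_never; rewrite // eq_sym.
by rewrite cardsX !cards2 nab nij.
Qed.
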